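(* Let $R$ be a ring satisfying the ascending chain condition on left annihilators, let $\mathbb S=R[X^{\pm1};\boldsymbol\alpha]$ be a skew Laurent polynomial ring of bijective type, let $\mathcal T$ be a submonoid of the free abelian group $G_X$, and let $A=R[\mathcal T;\boldsymbol\alpha]=\bigoplus_{\tau\in\mathcal T}R\tau\subseteq\mathbb S$. If $R$ is prime, then $A$ is prime; if $R$ is semiprime, then $A$ is semiprime.
   Context: Skew Laurent polynomial ring of bijective type: $X$ is a set of commuting variables, $G_X$ is the free abelian group on $X$, and $\mathbb S=R[X^{\pm1};\boldsymbol\alpha]$ is the ring which is a free left $R$-module with basis $G_X$, terms multiplying as in $G_X$, and for each $x\in X$ a ring automorphism $\alpha_x$ of $R$ with $xa=\alpha_x(a)x$, $x^{-1}a=\alpha_x^{-1}(a)x^{-1}$ for $a\in R$. *)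

From HB Require Import structures.
From mathcomp Require Import all_boot all_order all_algebra.
From mathcomp Require Import finmap.
From mathcomp.multinomials Require Import freeg monalg.

Set Implicit Arguments.
Unset Strict Implicit.
Unset Printing Implicit Defensive.

Import GRing.Theory.
Local Open Scope ring_scope.

Definition GX (X : choiceType) := {freeg X / int}.

(* The underlying left R-module of the skew Laurent polynomial ring
   S = R[X^{+-1}; alpha]: finitely supported functions G_X -> R,
   i.e. sums  \sum_g r_g g  with r_g in R. *)
Definition SLaurent (R : nzRingType) (X : choiceType) := {malg R[GX X]}.

(* The action of the group G_X on R is given as a group homomorphism
   alpha : G_X -> Aut(R), i.e. g |-> alpha^g, which is the same data as a
   commuting family of automorphisms (alpha_x)_{x in X}
   (alpha_x = alpha (x as a generator), alpha_x^{-1} = alpha (- x)). *)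
Definition skew_action (R : nzRingType) (X : choiceType)
    (alpha : GX X -> {rmorphism R -> R}) : Prop :=
  (forall r, alpha 0 r = r) /\
  (forall g h r, alpha (g + h) r = alpha g (alpha h r)).

Definition mulS (R : nzRingType) (X : choiceType)
    (alpha : GX X -> {rmorphism R -> R}) (f g : SLaurent R X) : SLaurent R X :=
  \sum_(s <- msupp f) \sum_(t <- msupp g)
     mkmalgU (s + t) (f@_s * alpha s (g@_t)).

Definition inA (R : nzRingType) (X : choiceType) (T : GX X -> Prop)
    (f : SLaurent R X) : Prop :=
  forall s, s \in msupp f -> T s.

Definition submonoid (G : zmodType) (T : G -> Prop) : Prop :=
  T 0 /\ (forall s t, T s -> T t -> T (s + t)).

Definition prime_ring (R : nzRingType) : Prop :=
  forall a b : R, (forall r : R, a * r * b = 0) -> a = 0 \/ b = 0.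

Definition semiprime_ring (R : nzRingType) : Prop :=
  forall a : R, (forall r : R, a * r * a = 0) -> a = 0.

Definition prime_A (R : nzRingType) (X : choiceType)
    (alpha : GX X -> {rmorphism R -> R}) (T : GX X -> Prop) : Prop :=
  forall a b : SLaurent R X, inA T a -> inA T b ->
    (forall r, inA T r -> mulS alpha (mulS alpha a r) b = 0) -> a = 0 \/ b = 0.

Definition semiprime_A (R : nzRingType) (X : choiceType)
    (alpha : GX X -> {rmorphism R -> R}) (T : GX X -> Prop) : Prop :=
  forall a : SLaurent R X, inA T a ->
    (forall r, inA T r -> mulS alpha (mulS alpha a r) a = 0) -> a = 0.

Definition left_ann (R : nzRingType) (S : R -> Prop) : R -> Prop :=
  fun r => forall s, S s -> r * s = 0.

Definition acc_left_ann (R : nzRingType) : Prop :=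
  forall S : nat -> (R -> Prop),
    (forall n r, left_ann (S n) r -> left_ann (S n.+1) r) ->
    exists N, forall n, (N <= n)%N ->
      forall r, left_ann (S n) r <-> left_ann (S N) r.

From HB Require Import structures.
From mathcomp Require Import all_boot all_order all_algebra.
From mathcomp Require Import finmap.
From mathcomp.multinomials Require Import freeg monalg.
From mathcomp Require Import zify.

Set Implicit Arguments.
Unset Strict Implicit.
Unset Printing Implicit Defensive.

Import Order.TTheory GRing.Theory Num.Theory.
Local Open Scope ring_scope.

(* Fix an additive weight [phi : G_X -> Z] that is injective on the supports of
   the elements at hand. Then every nonzero element has a leading monomial, and
   leading terms multiply: if [a], [b] have leading exponents [s], [t] and [tau]
   lies in [T], the coefficient of [a (alpha_{-s}(z) tau) b] at [s + tau + t] is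
   [a_s z alpha_{s+tau}(b_t)]. So [a A b = 0] gives [a_s R alpha_s(b_t) = 0]
   ([tau = 0]), which contradicts primeness of [R] unless [a] or [b] vanishes.
   If [a A a = 0], taking [tau = n s] gives [c R alpha_s^(n+1)(c) = 0] for
   [c = a_s] and all [n]; ACC on the left annihilators of the tails of the
   [alpha_s]-orbit of [c] then forces [c R c = 0]. *)

Lemma ler_sum_mem (R : numDomainType) (I : eqType) (s : seq I) (F : I -> R) i :
  (forall j, 0 <= F j) -> i \in s -> F i <= \sum_(j <- s) F j.
Proof.
by move=> F_ge0 si; rewrite (perm_big _ (perm_to_rem si)) big_cons lerDl sumr_ge0.
Qed.

Section SeparatingWeight.
Variable X : choiceType.

(* Reading the coordinates along [xs] as digits in base [B]. *)
Definition weight (xs : seq X) (B : int) (u : GX X) : int :=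
  foldr (fun x acc => coeff x u + B * acc) 0 xs.

Lemma weightD xs B u v : weight xs B (u + v) = weight xs B u + weight xs B v.
Proof. by elim: xs => [|x xs IH] /=; rewrite ?addr0 // IH coeffD; lia. Qed.

Lemma weightB xs B u v : weight xs B (u - v) = weight xs B u - weight xs B v.
Proof. by elim: xs => [|x xs IH] /=; rewrite ?subr0 // IH coeffB; lia. Qed.

Lemma weight_eq0 xs B d : {in xs, forall x, `|coeff x d| < B} ->
  weight xs B d = 0 -> {in xs, forall x, coeff x d = 0}.
Proof.
elim: xs => [|y xs IH] // d_lt d0.
change (coeff y d + B * weight xs B d = 0) in d0.
have [y_lt xs_lt] := (d_lt y (mem_head _ _), fun x xs_x => d_lt x (mem_behead xs_x)).
have w0 : weight xs B d = 0.
  apply/eqP; apply: contraTT y_lt => /eqP w_neq0.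
  by rewrite (_ : coeff y d = - (B * weight xs B d)); [nia | lia].
by move=> x; rewrite in_cons => /predU1P [->|/(IH xs_lt w0)//]; lia.
Qed.

Lemma norm_coeff_le_sum (u : GX X) x :
  `|coeff x u| <= \sum_(y <- dom u) `|coeff y u|.
Proof.
have [ux|ux] := boolP (x \in dom u).
  by apply: (ler_sum_mem (F := fun y => `|coeff y u|)).
by rewrite coeff_outdom // normr0 sumr_ge0.
Qed.

(* [M] bounds every coordinate of an element of [F], so a difference of two
   elements of [F] has all its digits below the base [2 M + 1]. *)
Lemma exists_separating_weight (F : seq (GX X)) :
  exists phi : GX X -> int,
    (forall u v, phi (u + v) = phi u + phi v) /\ {in F &, injective phi}.
Proof.
pose M : int := \sum_(u <- F) \sum_(y <- dom u) `|coeff y u|.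
have coeff_le x u : u \in F -> `|coeff x u| <= M.
  move=> Fu; apply: le_trans (norm_coeff_le_sum u x) _.
  by apply: (ler_sum_mem (F := fun v => \sum_(y <- dom v) `|coeff y v|)) => // v;
    rewrite sumr_ge0.
pose xs := flatten [seq dom u | u <- F].
exists (weight xs (2 * M + 1)); split=> [|u v Fu Fv uv]; first exact: weightD.
apply/eqP/freeg_eqP => x; apply/eqP; rewrite -subr_eq0 -coeffB; apply/eqP.
have [xs_x|xs_x] := boolP (x \in xs).
  apply: (weight_eq0 (B := 2 * M + 1)) xs_x; last by rewrite weightB uv subrr.
  move=> y _; rewrite coeffB; move: (coeff_le y u Fu) (coeff_le y v Fv).
  move: (coeff y u) (coeff y v) => a b; lia.
rewrite coeffB !coeff_outdom ?subrr //; apply: contra xs_x => dom_x;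
  apply/flatten_mapP; by [exists u | exists v].
Qed.

End SeparatingWeight.

Section LeadingTerm.
Variables (R : nzRingType) (X : choiceType) (alpha : GX X -> {rmorphism R -> R}).
Variable phi : GX X -> int.
Hypothesis phiD : forall u v, phi (u + v) = phi u + phi v.

(* No nonzero-coefficient hypothesis on [s], so that monomials [0 *g s] qualify. *)
Definition leading (f : SLaurent R X) (s : GX X) :=
  {in msupp f, forall s', (s' == s) || (phi s' < phi s)}.

Lemma leading_mkmalgU s (x : R) : leading << x *g s >> s.
Proof. by move=> s' /(fsubsetP msuppU_le); rewrite inE => ->. Qed.

Lemma exists_leading (f : SLaurent R X) : f != 0 -> {in msupp f &, injective phi} ->
  exists2 s, s \in msupp f & leading f s.
Proof.
move=> f_neq0 phi_inj; have [f0|[s0 fs0]] := fset_0Vmem (msupp f).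
  by case/eqP: f_neq0; apply/malgP => k; rewrite mcoeff0 mcoeff_outdom // f0.
have [/= s _ s_max] := @arg_maxP _ _ (msupp f) [` fs0]%fset predT (phi \o val) isT.
exists (val s) => [|s' fs']; first exact: valP.
have := s_max [` fs']%fset isT; rewrite /= le_eqVlt => /predU1P [phi_eq|->].
  by rewrite (phi_inj _ _ fs' (valP s) phi_eq) eqxx.
by rewrite orbT.
Qed.

Lemma mcoeff_mulS (f g : SLaurent R X) k : (mulS alpha f g)@_k =
  \sum_(s <- msupp f) \sum_(t <- msupp g) (f@_s * alpha s g@_t) *+ (s + t == k).
Proof.
rewrite /mulS raddf_sum; apply: eq_bigr => s _.
by rewrite raddf_sum; apply: eq_bigr => t _; exact: mcoeffU.
Qed.

Lemma msupp_mulS (f g : SLaurent R X) k : k \in msupp (mulS alpha f g) ->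
  exists s t, [/\ s \in msupp f, t \in msupp g & s + t = k].
Proof.
rewrite -mcoeff_neq0 mcoeff_mulS => /eqP sum_neq0.
have /hasP [s fs /hasP [t gt /eqP st]] :
    has (fun s => has (fun t => s + t == k) (msupp g)) (msupp f).
  apply/negPn/negP => /hasPn no_split; apply: sum_neq0.
  rewrite big1_seq // => s /andP [_ /no_split /hasPn no_t].
  by rewrite big1_seq // => t /andP [_ /no_t /negbTE ->].
by exists s, t.
Qed.

Section Products.
Variables (f g : SLaurent R X) (s t : GX X).
Hypotheses (lead_f : leading f s) (lead_g : leading g t).

Lemma leading_split s' t' : s' \in msupp f -> t' \in msupp g ->
  phi (s + t) <= phi (s' + t') -> s' = s /\ t' = t.
Proof.
move=> /lead_f /orP s_top /lead_g /orP t_top; rewrite !phiD.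
by case: s_top t_top => [/eqP ->|lt_s] [/eqP ->|lt_t] //; lia.
Qed.

Lemma leading_mulS : leading (mulS alpha f g) (s + t).
Proof.
move=> k /msupp_mulS [s' [t' [fs' gt' <-]]].
have [_|le_st] := ltP (phi (s' + t')) (phi (s + t)); first by rewrite orbT.
by have [-> ->] := leading_split fs' gt' le_st; rewrite eqxx.
Qed.

Lemma mcoeff_mulS_leading : (mulS alpha f g)@_(s + t) = f@_s * alpha s g@_t.
Proof.
have split_st s' t' : s' \in msupp f -> t' \in msupp g -> s' + t' = s + t ->
    s' = s /\ t' = t.
  by move=> fs' gt' st; apply: leading_split => //; rewrite st.
have [fs|fs] := boolP (s \in msupp f); last first.
  rewrite (mcoeff_outdom fs) mul0r; apply/eqP; rewrite mcoeff_eq0.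
  apply: contra fs => /msupp_mulS [s' [t' [fs' gt' st]]].
  by have [<- _] := split_st _ _ fs' gt' st.
have [gt|gt] := boolP (t \in msupp g); last first.
  rewrite (mcoeff_outdom gt) rmorph0 mulr0; apply/eqP; rewrite mcoeff_eq0.
  apply: contra gt => /msupp_mulS [s' [t' [fs' gt' st]]].
  by have [_ <-] := split_st _ _ fs' gt' st.
rewrite mcoeff_mulS (bigD1_seq s fs (fset_uniq _)) (bigD1_seq t gt (fset_uniq _)) /=.
rewrite eqxx mulr1n.
rewrite [X in _ + X]big1_seq ?addr0 => [|s' /andP [s'_neq_s fs']]; last first.
  rewrite big1_seq // => t' /andP [_ gt'].
  case: eqP => // /(split_st _ _ fs' gt') [].
  by move/eqP: s'_neq_s.
rewrite big1_seq ?addr0 // => t' /andP [t'_neq_t gt'].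
by case: eqP => // /(split_st _ _ fs gt') [_]; move/eqP: t'_neq_t.
Qed.

End Products.

End LeadingTerm.

Lemma inA_mkmalgU (R : nzRingType) (X : choiceType) (T : GX X -> Prop) m (x : R) :
  T m -> inA T << x *g m >>.
Proof. by move=> Tm m' /(fsubsetP msuppU_le); rewrite inE => /eqP ->. Qed.

Section SkewAction.
Variables (R : nzRingType) (X : choiceType) (alpha : GX X -> {rmorphism R -> R}).
Hypothesis alpha_action : skew_action alpha.

Lemma alpha0 : alpha 0 =1 id.
Proof. by move=> x; case: alpha_action. Qed.

Lemma alphaD g h : alpha (g + h) =1 alpha g \o alpha h.
Proof. by move=> x; case: alpha_action. Qed.

Lemma alphaK g : cancel (alpha g) (alpha (- g)).
Proof. by move=> x; rewrite -[RHS]alpha0 -(addNr g) alphaD. Qed.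

Lemma alphaNK g : cancel (alpha (- g)) (alpha g).
Proof. by move=> x; rewrite -[RHS]alpha0 -(subrr g) alphaD. Qed.

Variable phi : GX X -> int.
Hypothesis phiD : forall u v, phi (u + v) = phi u + phi v.

(* The middle factor is twisted by [alpha (- s)] to cancel the action of the
   leading term of [a] on it. *)
Lemma mcoeff_mulS_sandwich (a b : SLaurent R X) (s t m : GX X) (z : R) :
  leading phi a s -> leading phi b t ->
  (mulS alpha (mulS alpha a << alpha (- s) z *g m >>) b)@_(s + m + t) =
    a@_s * z * alpha (s + m) b@_t.
Proof.
move=> lead_a lead_b.
have lead_U : leading phi << alpha (- s) z *g m >> m by exact: leading_mkmalgU.
have lead_am := leading_mulS (alpha := alpha) phiD lead_a lead_U.
rewrite (mcoeff_mulS_leading alpha phiD lead_am lead_b).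
by rewrite (mcoeff_mulS_leading alpha phiD lead_a lead_U) mcoeffUU alphaNK alphaD.
Qed.

Lemma mcoeff_sandwich_eq0 (T : GX X -> Prop) (a b : SLaurent R X) s t m z :
  leading phi a s -> leading phi b t -> T m ->
  (forall r, inA T r -> mulS alpha (mulS alpha a r) b = 0) ->
  a@_s * z * alpha (s + m) b@_t = 0.
Proof.
move=> lead_a lead_b Tm ann_ab.
rewrite -(mcoeff_mulS_sandwich m z lead_a lead_b) ann_ab ?mcoeff0 //.
exact: inA_mkmalgU.
Qed.

End SkewAction.

Section AnnihilatorChain.
Variable R : nzRingType.
Hypothesis acc : acc_left_ann R.
Variable beta : nat -> {rmorphism R -> R}.
Hypothesis betaD : forall m n, beta (m + n)%N =1 beta m \o beta n.
Hypothesis beta_inj : forall n, injective (beta n).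

(* The left annihilators of the tails [{beta m c | n <= m}] of the orbit of [c]
   increase with [n]. Once they are stable from [N] on, [beta N (c y)], which kills
   the tail from [N + 1], also kills [beta N c]. *)
Lemma orbit_sandwich_eq0 c : (forall n y, c * y * beta n.+1 c = 0) ->
  forall y, c * y * c = 0.
Proof.
move=> c_orbit y.
pose tail n z := exists2 m, (n <= m)%N & z = beta m c.
have tail_ann n r : left_ann (tail n) r -> left_ann (tail n.+1) r.
  by move=> ann_r _ [m lt_nm ->]; apply: ann_r; exists m => //; apply: ltnW.
have [N stable] := acc tail_ann.
have ann_tail : left_ann (tail N.+1) (beta N (c * y)).
  move=> _ [m lt_Nm ->]; have m_gt0 : (0 < m - N)%N by rewrite subn_gt0.
  rewrite -(subnKC (ltnW lt_Nm)) betaD /= -rmorphM.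
  by rewrite -(prednK m_gt0) c_orbit rmorph0.
apply: (beta_inj (n := N)); rewrite rmorph0 rmorphM.
by apply: (proj1 (stable N.+1 (leqnSn N) _) ann_tail); exists N.
Qed.

End AnnihilatorChain.

Section Primeness.
Variables (R : nzRingType) (X : choiceType) (alpha : GX X -> {rmorphism R -> R}).
Variable T : GX X -> Prop.
Hypothesis alpha_action : skew_action alpha.

Lemma prime_A_of_prime : T 0 -> prime_ring R -> prime_A alpha T.
Proof.
move=> T0 R_prime a b _ _ ann_ab.
have [-> | a_neq0] := eqVneq a 0; first by left.
have [-> | b_neq0] := eqVneq b 0; first by right.
have [phi [phiD phi_inj]] := exists_separating_weight (msupp a ++ msupp b).
have sub_a : {subset msupp a <= msupp a ++ msupp b}.
  by move=> u au; rewrite mem_cat au.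
have sub_b : {subset msupp b <= msupp a ++ msupp b}.
  by move=> u bu; rewrite mem_cat bu orbT.
have [s fs lead_a] := exists_leading a_neq0 (sub_in2 sub_a phi_inj).
have [t gt lead_b] := exists_leading b_neq0 (sub_in2 sub_b phi_inj).
have ann_st z : a@_s * z * alpha s b@_t = 0.
  rewrite -[s in alpha s]addr0.
  exact: (mcoeff_sandwich_eq0 alpha_action phiD z lead_a lead_b T0).
exfalso; case: (R_prime _ _ ann_st) => [as0 | bt0].
  by move: fs; rewrite -mcoeff_neq0 as0 eqxx.
by move: gt; rewrite -mcoeff_neq0 -(alphaK alpha_action s b@_t) bt0 rmorph0 eqxx.
Qed.

Lemma semiprime_A_of_semiprime : acc_left_ann R -> submonoid T ->
  semiprime_ring R -> semiprime_A alpha T.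
Proof.
move=> acc [T0 TD] R_semiprime a a_A ann_aa.
apply/eqP; apply: contraT => a_neq0.
have [phi [phiD phi_inj]] := exists_separating_weight (msupp a).
have [s fs lead_a] := exists_leading a_neq0 phi_inj.
have T_mulrn n : T (s *+ n).
  by elim: n => [|n IH]; rewrite ?mulr0n // mulrS; apply: TD; first exact: a_A.
have c_orbit n z : a@_s * z * alpha (s *+ n.+1) a@_s = 0.
  rewrite mulrS.
  exact: (mcoeff_sandwich_eq0 alpha_action phiD z lead_a lead_a (T_mulrn n)).
have betaD m n : alpha (s *+ (m + n)) =1 alpha (s *+ m) \o alpha (s *+ n).
  by move=> x; rewrite mulrnDr alphaD.
have beta_inj n : injective (alpha (s *+ n)).
  exact: can_inj (alphaK alpha_action _).
have as0 := R_semiprime _ (orbit_sandwich_eq0 acc betaD beta_inj c_orbit).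
by move: fs; rewrite -mcoeff_neq0 as0 eqxx.
Qed.

End Primeness.

Theorem mainTheorem6 (R : nzRingType) (X : choiceType)
    (alpha : GX X -> {rmorphism R -> R}) (T : GX X -> Prop) :
  acc_left_ann R ->
  skew_action alpha ->
  submonoid T ->
  (prime_ring R -> prime_A alpha T) /\
  (semiprime_ring R -> semiprime_A alpha T).
Proof.
move=> acc alpha_action T_monoid; split.
  exact: prime_A_of_prime T_monoid.1.
exact: semiprime_A_of_semiprime.
Qed.
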